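(* Let $k$ be an algebraically closed field of characteristic zero and let $G=(V,E)$ be a finite graph satisfying: (1) $G$ is connected; (2) $G$ is simple; (3) $G$ is strictly subtrivalent; (4) the shortest path between any two distinct vertices of degree $3$ contains at least $3$ edges; (5) $G$ contains no triangle. Let $d=|V|$ and $g=|E|-d+1$. Then the graph curve $C_G$ can be embedded into $\mathbb{P}^{d-g}$ (with homogeneous coordinates $x_0,\ldots,x_{d-g}$) so that the homogeneous ideal of each of its component lines is generated by variables $x_i$ and binomials of the form $x_j - x_k$.
   Context: A graph is strictly subtrivalent if every vertex has degree at most $3$ and at least one vertex has degree less than $3$. The (abstract) graph curve $C_G$ is the union of copies $L_v \cong \mathbb{P}^1$, $v \in V$, where $L_u$ and $L_v$ meet in a node if and only if $uv \in E$ (and are disjoint otherwise); since every vertex has degree at most $3$, on each component the nodes may be taken at $0,1,\infty$, so $C_G$ is determined by $G$. An embedding of $C_G$ into $\mathbb{P}^{d-g}$ means a union of lines $L_v \subset \mathbb{P}^{d-g}$, $v\in V$, with $L_u \cap L_v$ a single point (a node) if $uv\in E$ and empty otherwise. *)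

From HB Require Import structures.
From mathcomp Require Import all_boot all_order all_algebra.
From mathcomp Require Import mpoly.
Set Implicit Arguments. Unset Strict Implicit. Unset Printing Implicit Defensive.
Import Order.TTheory GRing.Theory.
Local Open Scope ring_scope.

Definition simple_graph (V : finType) (adj : rel V) : Prop :=
  ssrbool.symmetric adj /\ irreflexive adj.

Definition deg (V : finType) (adj : rel V) (v : V) : nat := #|[set u | adj v u]|.

Definition edges (V : finType) (adj : rel V) : {set {set V}} :=
  [set s : {set V} | [exists u, exists v, adj u v && (s == [set u; v])]].

Definition connected_graph (V : finType) (adj : rel V) : Prop :=
  forall u v : V, connect adj u v.

Definition strictly_subtrivalent (V : finType) (adj : rel V) : Prop :=
  (forall v, (deg adj v <= 3)%N) /\ (exists v, (deg adj v < 3)%N).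

(* distinct degree-3 vertices are at distance >= 3: neither adjacent nor with a common neighbour *)
Definition deg3_far_apart (V : finType) (adj : rel V) : Prop :=
  forall u v : V, u != v -> deg adj u = 3%N -> deg adj v = 3%N ->
    ~~ adj u v /\ (forall w, ~~ (adj u w && adj w v)).

Definition triangle_free (V : finType) (adj : rel V) : Prop :=
  forall u v w : V, ~~ [&& adj u v, adj v w & adj w u].

(* the dimension d - g of the target projective space, with d = |V|, g = |E| - d + 1;
   d - g = 2|V| - |E| - 1 (nonnegative under the hypotheses) *)
Definition target_dim (V : finType) (adj : rel V) : nat :=
  (2 * #|V| - #|edges adj| - 1)%N.

(* a subspace of k^(n+1) is represented as the row space of a square matrix;
   a line of P^n is a 2-dimensional subspace *)

(* an embedding of the graph curve C_G as a union of lines L_v in P^n: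
   L_u, L_v meet in exactly one point if uv is an edge, are disjoint otherwise,
   and on each line the nodes coming from distinct neighbours are distinct
   (so the union is a nodal curve whose dual graph is G, i.e. it is C_G). *)
Definition graph_curve_embedding (k : fieldType) (n : nat) (V : finType)
    (adj : rel V) (L : V -> 'M[k]_(n.+1)) : Prop :=
  [/\ forall v, \rank (L v) = 2%N,
      forall u v, u != v -> adj u v -> \rank (L u :&: L v)%MS = 1%N,
      forall u v, u != v -> ~~ adj u v -> \rank (L u :&: L v)%MS = 0%N &
      forall v u w, adj v u -> adj v w -> u != w ->
        ~~ ((L u :&: L v) == (L w :&: L v))%MS ].

(* the (homogeneous) ideal of the linear subvariety P(W) of P^n: polynomials
   vanishing on the cone W ⊆ k^(n+1) *)
Definition vanishing_ideal (k : fieldType) (n : nat) (W : 'M[k]_(n.+1))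
    (p : {mpoly k[n.+1]}) : Prop :=
  forall x : 'rV[k]_(n.+1), (x <= W)%MS -> p.@[fun i => x 0 i] = 0.

Definition ideal_gen (k : fieldType) (m : nat) (S : seq {mpoly k[m]})
    (p : {mpoly k[m]}) : Prop :=
  exists c : 'I_(size S) -> {mpoly k[m]}, p = \sum_(i < size S) c i * S`_i.

Definition var_or_binomial (k : fieldType) (m : nat) (f : {mpoly k[m]}) : Prop :=
  (exists i : 'I_m, f = 'X_i) \/ (exists j l : 'I_m, f = 'X_j - 'X_l).

(* Give every vertex v two slots (v, 0) and (v, 1), standing for its first two neighbours.
   The two slots at the ends of an edge are paired and share one coordinate of P^(d-g); the
   other slots get coordinates of their own, except that the slot of u pointing to a vertex x
   of degree 3 whose third neighbour is u is absorbed: it is assigned both coordinates of x.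
   Every slot thus gets a nonempty block of coordinates, the two blocks of a vertex are
   disjoint, and L_v is the line spanned by the indicator vectors of these blocks. Such a line
   is cut out by the variables outside the two blocks and the binomials x_i - x_j inside each
   block. Degree-3 vertices being at distance >= 3 and the absence of triangles make the
   blocks of two vertices overlap exactly when they are adjacent, so that L_u and L_v meet in
   a point iff uv is an edge. Finally every edge either pairs two slots or absorbs one, so at
   most 2|V| - |E| = d - g + 1 coordinates are used. *)

From HB Require Import structures.
From mathcomp Require Import all_boot all_order all_algebra.
From mathcomp Require Import mpoly.
From mathcomp Require Import ring zify.
Set Implicit Arguments. Unset Strict Implicit. Unset Printing Implicit Defensive.
Import Order.TTheory GRing.Theory.

Section IndicatorLines.
Variables (k : fieldType) (N : nat).
Local Open Scope ring_scope.
Implicit Types (A B C D : {set 'I_N}) (x : 'rV[k]_N).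

Definition ind_row A : 'rV[k]_N := \row_j (j \in A)%:R.

Definition ind_line A B : 'M[k]_N := <<col_mx (ind_row A) (ind_row B)>>%MS.

Lemma sub_ind_lineP A B x :
  reflect (exists a b, x = a *: ind_row A + b *: ind_row B) (x <= ind_line A B)%MS.
Proof.
rewrite /ind_line genmxE -addsmxE.
apply: (iffP sub_addsmxP) => [[u ->]|[a [b ->]]]; last first.
  by exists (a%:M, b%:M); rewrite /= !mul_scalar_mx.
exists (u.1 0 0), (u.2 0 0).
by rewrite {1}[u.1]mx11_scalar {1}[u.2]mx11_scalar !mul_scalar_mx.
Qed.

Lemma ind_lineC A B : ind_line A B = ind_line B A.
Proof.
apply: eq_genmx; apply: eqmx_trans (eqmx_sym (addsmxE _ _)) _.
by rewrite addsmxC; apply: addsmxE.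
Qed.

Lemma ind_row_neq0 A : A != set0 -> ind_row A != 0.
Proof.
case/set0Pn => j jA; apply/eqP => /rowP /(_ j).
by rewrite !mxE jA => /eqP; rewrite oner_eq0.
Qed.

Lemma sub_ind_row_eq A B : A != set0 -> (ind_row A <= ind_row B)%MS -> A = B.
Proof.
case/set0Pn => j0 j0A /sub_rVP [c /rowP E]; apply/setP => j.
have := E j0; rewrite !mxE j0A.
case: (j0 \in B) => /=; last by rewrite mulr0 => /eqP; rewrite oner_eq0.
rewrite mulr1 => c1; have := E j; rewrite !mxE -c1 mul1r.
by case: (j \in A); case: (j \in B) => // /eqP; rewrite ?oner_eq0 // eq_sym oner_eq0.
Qed.

Lemma ind_rowU A B : [disjoint A & B] -> ind_row (A :|: B) = ind_row A + ind_row B.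
Proof.
move=> dAB; apply/rowP => j; rewrite !mxE inE.
by case: (boolP (j \in A)) => jA /=; rewrite ?add0r // (disjointFr dAB jA) addr0.
Qed.

Lemma mxrank_cap0 m1 m2 (L1 : 'M[k]_(m1, N)) (L2 : 'M[k]_(m2, N)) :
  (forall x, (x <= L1)%MS -> (x <= L2)%MS -> x = 0) -> \rank (L1 :&: L2)%MS = 0%N.
Proof.
move=> H; apply/eqP; rewrite mxrank_eq0 -submx0; apply/row_subP => i.
have := row_sub i (L1 :&: L2)%MS; rewrite sub_capmx => /andP [h1 h2].
by rewrite (H _ h1 h2) sub0mx.
Qed.

Lemma capmx_eq_row (L1 L2 : 'M[k]_N) x : (x <= L1)%MS -> (x <= L2)%MS ->
  (forall y : 'rV[k]_N, (y <= L1)%MS -> (y <= L2)%MS -> (y <= x)%MS) -> (L1 :&: L2 == x)%MS.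
Proof.
move=> h1 h2 H; rewrite sub_capmx h1 h2 !andbT.
apply/row_subP => i; have := row_sub i (L1 :&: L2)%MS.
by rewrite sub_capmx => /andP [] /H; apply.
Qed.

Lemma mxrank_ind_line A B : A != set0 -> B != set0 -> [disjoint A & B] ->
  \rank (ind_line A B) = 2%N.
Proof.
move=> nA nB dAB; rewrite /ind_line genmxE -addsmxE.
have := mxrank_sum_cap (ind_row A) (ind_row B); rewrite !rank_rV !ind_row_neq0 //.
suff -> : \rank (ind_row A :&: ind_row B)%MS = 0%N by rewrite addn0.
apply: mxrank_cap0 => x /sub_rVP [a ->] /sub_rVP [b /rowP E].
case/set0Pn: nA => j jA; have := E j; rewrite !mxE jA (disjointFr dAB jA).
by rewrite mulr1 mulr0 => ->; rewrite scale0r.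
Qed.

Lemma capmx_ind_row_neq (L1 L2 L3 : 'M[k]_N) A B : A != set0 -> A != B ->
  (L1 :&: L3 == ind_row A)%MS -> (L2 :&: L3 == ind_row B)%MS ->
  ~~ (L1 :&: L3 == L2 :&: L3)%MS.
Proof.
move=> nA AB /andP [_ e1] /andP [e2 _]; apply: contra AB => /andP [e _].
by apply/eqP/sub_ind_row_eq => //; apply: submx_trans e2; apply: submx_trans e.
Qed.

Lemma ind_line_cap_sub A B C D x : D != set0 -> [disjoint A :|: B :|: C & D] ->
  (x <= ind_line A B)%MS -> (x <= ind_line C D)%MS -> (x <= ind_row C)%MS.
Proof.
case/set0Pn => j jD dis /sub_ind_lineP [a [b E1]] /sub_ind_lineP [c [d E2]].
move: (disjointFl dis jD); rewrite !inE => /norP [/norP [/negbTE jA /negbTE jB] /negbTE jC].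
have : x 0 j = 0 by rewrite E1 !mxE jA jB !mulr0 addr0.
rewrite E2 !mxE jC jD mulr0 mulr1 add0r => d0.
by rewrite d0 scale0r addr0 scalemx_sub.
Qed.

Lemma ind_line_cap_eq0 A B C D (i j : 'I_N) x :
  i \in C -> i \notin A :|: B :|: D -> j \in D -> j \notin A :|: B :|: C ->
  (x <= ind_line A B)%MS -> (x <= ind_line C D)%MS -> x = 0.
Proof.
rewrite !inE => iC /norP [/norP [/negbTE iA /negbTE iB] /negbTE iD].
move=> jD /norP [/norP [/negbTE jA /negbTE jB] /negbTE jC].
case/sub_ind_lineP => a [b E1] /sub_ind_lineP [c [d E2]].
have : x 0 i = 0 by rewrite E1 !mxE iA iB !mulr0 addr0.
rewrite E2 !mxE iC iD mulr1 mulr0 addr0 => c0.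
have : x 0 j = 0 by rewrite E1 !mxE jA jB !mulr0 addr0.
rewrite E2 !mxE jD jC mulr1 mulr0 add0r => d0.
by rewrite c0 d0 !scale0r addr0.
Qed.

End IndicatorLines.

Section VanishingPolynomials.
Variable k : fieldType.
Local Open Scope ring_scope.
Hypothesis k_char0 : [pchar k] =i pred0.

Lemma natr_inj : injective (fun i : nat => i%:R : k).
Proof.
move=> i j /= E; wlog le_ij : i j E / (i <= j)%N.
  by move=> W; case: (leqP i j) => [|/ltnW] h; [apply: W | apply/esym/W].
have : ((j - i)%:R : k) == 0 by rewrite natrB // E subrr.
by rewrite (pcharf0P k).1 // subn_eq0 => ji; apply/eqP; rewrite eqn_leq le_ij.
Qed.

Lemma poly_eval_eq0 (q : {poly k}) : (forall t, q.[t] = 0) -> q = 0.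
Proof.
move=> Hq; apply: (@roots_geq_poly_eq0 _ q [seq i%:R | i <- iota 0 (size q)]).
- by apply/allP => x _; apply/eqP; apply: Hq.
- by rewrite map_inj_uniq ?iota_uniq //; apply: natr_inj.
- by rewrite size_map size_iota.
Qed.

Lemma meval_mwiden n (q : {mpoly k[n]}) (v : 'I_n.+1 -> k) :
  (mwiden q).@[v] = q.@[fun i => v (widen_ord (leqnSn n) i)].
Proof.
elim/mpolyind: q => [|c m q _ _ IH]; first by rewrite mwiden0 !meval0.
rewrite mwidenD mwidenZ mwidenX !mevalD !mevalZ !mevalX IH; congr (_ * _ + _).
rewrite big_ord_recr /= mnmwiden_ordmax expr0 mulr1.
by apply: eq_bigr => i _; rewrite mnmwiden_widen.
Qed.

Definition mnm_init n (m : 'X_{1..n.+1}) : 'X_{1..n} :=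
  [multinom m (widen_ord (leqnSn n) i) | i < n].

Lemma mpolyX_split_last n (m : 'X_{1..n.+1}) :
  'X_[m] = mwiden 'X_[mnm_init m] * 'X_ord_max ^+ (m ord_max) :> {mpoly k[n.+1]}.
Proof.
rewrite mwidenX mpolyXn -mpolyXD; congr 'X_[_]; apply/mnmP => i.
rewrite mnmDE mulmnE mnm1E.
case: (unliftP ord_max i) => [j ->|->]; last by rewrite mnmwiden_ordmax eqxx mul1n.
have -> : lift ord_max j = widen_ord (leqnSn n) j.
  by apply: val_inj; rewrite /= /bump leqNgt ltn_ord.
rewrite mnmwiden_widen mnmE eq_sym (_ : (widen_ord _ j == ord_max) = false) ?addn0 //.
by apply/negbTE; rewrite -val_eqE /= neq_ltn ltn_ord.
Qed.

Lemma mpoly_split_last n (p : {mpoly k[n.+1]}) : exists B (q : nat -> {mpoly k[n]}),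
  p = \sum_(j < B) mwiden (q j) * 'X_ord_max ^+ j.
Proof.
elim/mpolyind: p => [|c m p _ _ [B [q ->]]].
  by exists 0%N, (fun _ => 0); rewrite big_ord0.
set e := m ord_max; pose B' := maxn B e.+1.
exists B', (fun j => (if (j < B)%N then q j else 0) +
                     (if j == e then c *: 'X_[mnm_init m] else 0)).
under [RHS]eq_bigr do rewrite mwidenD mulrDl.
rewrite big_split /= addrC; congr (_ + _); last first.
  rewrite (big_ord_widen _ (fun j => mwiden (q j) * 'X_ord_max ^+ j) (leq_maxl B e.+1)).
  rewrite big_mkcond /=.
  by apply: eq_bigr => j _; case: ifP; rewrite ?mwiden0 ?mul0r.
rewrite (bigD1 (Ordinal (leq_maxr B e.+1 : (e < B')%N))) //= eqxx.
rewrite big1 => [|j]; first by rewrite addr0 mwidenZ -scalerAl -mpolyX_split_last.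
by rewrite -val_eqE /= => /negbTE ->; rewrite mwiden0 mul0r.
Qed.

Lemma mpoly_eval_eq0 n (p : {mpoly k[n]}) : (forall v, p.@[v] = 0) -> p = 0.
Proof.
elim: n p => [|n IH] p Hp.
  have -> : p = (\sum_(m <- msupp p) p@_m) *: 1.
    rewrite {1}(mpolyE p) scaler_suml; apply: eq_bigr => m _.
    by rewrite (nvar0_mnmE m) mpolyX0.
  have <- : p.@[fun _ => 0] = \sum_(m <- msupp p) p@_m.
    by rewrite mevalE; apply: eq_bigr => m _; rewrite big_ord0 mulr1.
  by rewrite Hp scale0r.
have [B [q Ep]] := mpoly_split_last p.
suff q0 j : (j < B)%N -> q j = 0.
  by rewrite Ep big1 // => j _; rewrite q0 // mwiden0 mul0r.
move=> jB; apply: IH => w.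
pose v t (i : 'I_n.+1) := if insub (val i) is Some i' then w i' else t.
have vw t (i : 'I_n) : v t (widen_ord (leqnSn n) i) = w i.
  by rewrite /v; case: insubP => [i' _ /val_inj -> //|]; rewrite /= ltn_ord.
have vt t : v t ord_max = t by rewrite /v; case: insubP => //= i'; rewrite ltnn.
suff /(congr1 (fun P : {poly k} => P`_j)) : \poly_(i < B) (q i).@[w] = 0.
  by rewrite coef_poly jB coef0.
apply: poly_eval_eq0 => t; rewrite -(Hp (v t)) Ep raddf_sum /= horner_poly.
apply: eq_bigr => i _; rewrite mevalM rmorphXn /= mevalXU meval_mwiden vt.
by congr (_ * _); apply: meval_eq => i'; rewrite vw.
Qed.

End VanishingPolynomials.

Section IdealGen.
Variables (k : fieldType) (m : nat) (S : seq {mpoly k[m]}).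
Local Open Scope ring_scope.
Local Notation ideal := (ideal_gen S).

Lemma ideal_gen0 : ideal 0.
Proof. by exists (fun _ => 0); rewrite big1 // => i _; rewrite mul0r. Qed.

Lemma ideal_genD p q : ideal p -> ideal q -> ideal (p + q).
Proof.
case=> c -> [d ->]; exists (fun i => c i + d i).
by rewrite -big_split; apply: eq_bigr => i _; rewrite mulrDl.
Qed.

Lemma ideal_genMl q p : ideal p -> ideal (q * p).
Proof.
case=> c ->; exists (fun i => q * c i).
by rewrite mulr_sumr; apply: eq_bigr => i _; rewrite mulrA.
Qed.

Lemma ideal_gen_mem f : f \in S -> ideal f.
Proof.
move=> fS; pose i0 := Ordinal (etrans (index_mem f S) fS).
exists (fun i => (i == i0)%:R).
rewrite (bigD1 i0) //= eqxx mul1r big1 ?addr0 ?nth_index //.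
by move=> i /negbTE ->; rewrite mul0r.
Qed.

Lemma ideal_gen_sum (I : Type) (r : seq I) (F : I -> {mpoly k[m]}) :
  (forall i, ideal (F i)) -> ideal (\sum_(i <- r) F i).
Proof.
move=> H; elim: r => [|a r IH]; rewrite ?big_nil ?big_cons; [exact: ideal_gen0|exact: ideal_genD].
Qed.

Lemma ideal_gen_prodB (I : Type) (r : seq I) (a b : I -> {mpoly k[m]}) :
  (forall i, ideal (a i - b i)) -> ideal (\prod_(i <- r) a i - \prod_(i <- r) b i).
Proof.
move=> H; elim: r => [|x r IH]; first by rewrite !big_nil subrr; exact: ideal_gen0.
rewrite !big_cons.
have -> : a x * \prod_(j <- r) a j - b x * \prod_(j <- r) b j =
  a x * (\prod_(j <- r) a j - \prod_(j <- r) b j) + (\prod_(j <- r) b j) * (a x - b x).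
  by ring.
by apply: ideal_genD; apply: ideal_genMl.
Qed.

Lemma ideal_gen_expB a b e : ideal (a - b) -> ideal (a ^+ e - b ^+ e).
Proof.
move=> H; have := @ideal_gen_prodB _ (index_iota 0 e) (fun _ => a) (fun _ => b) (fun _ => H).
by rewrite !prodr_const_nat subn0.
Qed.

End IdealGen.

Section IndicatorLineIdeal.
Variable k : fieldType.
Local Open Scope ring_scope.
Hypothesis k_char0 : [pchar k] =i pred0.
Variables (n : nat) (A B : {set 'I_n.+1}) (r0 r1 : 'I_n.+1).
Hypotheses (r0A : r0 \in A) (r1B : r1 \in B) (dAB : [disjoint A & B]).

Definition ind_line_gens : seq {mpoly k[n.+1]} :=
  [seq 'X_i | i <- enum (~: (A :|: B))] ++ [seq 'X_i - 'X_r0 | i <- enum A]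
  ++ [seq 'X_i - 'X_r1 | i <- enum B].

Lemma ind_line_gens_var_or_binomial f : f \in ind_line_gens -> var_or_binomial f.
Proof.
rewrite !mem_cat => /or3P [] /mapP [i _ ->].
- by left; exists i.
- by right; exists i, r0.
- by right; exists i, r1.
Qed.

(* Substituting [collapse_var i] for [x_i] restricts a polynomial to the line, in the
   coordinates [x_r0] and [x_r1]: [p - collapse p] lies in the ideal, and [collapse p]
   vanishes on the line only if it is zero, [k] being infinite. *)
Definition collapse_var (i : 'I_n.+1) : {mpoly k[n.+1]} :=
  if i \in A then 'X_r0 else if i \in B then 'X_r1 else 0.

Definition collapse (p : {mpoly k[n.+1]}) := p \mPo [tuple collapse_var i | i < n.+1].

Lemma ideal_gen_collapse_var i : ideal_gen ind_line_gens ('X_i - collapse_var i).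
Proof.
apply: ideal_gen_mem; rewrite /collapse_var !mem_cat.
case: ifP => iA; first by apply/or3P/Or32/mapP; exists i; rewrite ?mem_enum.
case: ifP => iB; first by apply/or3P/Or33/mapP; exists i; rewrite ?mem_enum.
by apply/or3P/Or31/mapP; exists i; rewrite ?subr0 // mem_enum !inE iA iB.
Qed.

Lemma ideal_gen_sub_collapse p : ideal_gen ind_line_gens (p - collapse p).
Proof.
rewrite /collapse comp_mpolyEX {1}(mpolyE p) -sumrB.
apply: ideal_gen_sum => m; rewrite -scalerBr -mul_mpolyC; apply: ideal_genMl.
rewrite comp_mpolyX mpolyXE_id; apply: ideal_gen_prodB => i.
by rewrite tnth_mktuple; apply/ideal_gen_expB/ideal_gen_collapse_var.
Qed.

Lemma meval_ind_line_gens a b f : f \in ind_line_gens ->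
  f.@[fun j => (a *: ind_row k A + b *: ind_row k B) 0 j] = 0.
Proof.
have nB i : i \in A -> (i \in B) = false by move=> iA; exact: (disjointFr dAB iA).
have nA i : i \in B -> (i \in A) = false by move=> iB; exact: (disjointFl dAB iB).
rewrite !mem_cat => /or3P [] /mapP [i iS ->]; rewrite ?mevalB !mevalXU !mxE;
  move: iS; rewrite mem_enum.
- by rewrite !inE => /norP [/negbTE -> /negbTE ->]; rewrite !mulr0 addr0.
- by move=> iA; rewrite iA r0A !nB // subrr.
- by move=> iB; rewrite iB r1B !nA // subrr.
Qed.

Lemma vanishing_ideal_ind_line p :
  vanishing_ideal (ind_line k A B) p <-> ideal_gen ind_line_gens p.
Proof.
split => [Hv|[c -> x /sub_ind_lineP [a [b ->]]]]; last first.
  rewrite raddf_sum big1 // => i _.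
  by rewrite /= mevalM (meval_ind_line_gens a b (mem_nth 0 (ltn_ord i))) mulr0.
suff P0 : collapse p = 0 by have := ideal_gen_sub_collapse p; rewrite P0 subr0.
apply: (mpoly_eval_eq0 k_char0) => y; rewrite /collapse comp_mpoly_meval.
pose x : 'rV[k]_n.+1 := y r0 *: ind_row k A + y r1 *: ind_row k B.
have xL : (x <= ind_line k A B)%MS by apply/sub_ind_lineP; exists (y r0), (y r1).
rewrite -(Hv x xL); apply: meval_eq => i; rewrite tnth_mktuple /collapse_var /x !mxE.
case: ifP => iA; first by rewrite (disjointFr dAB iA) mevalXU mulr1 mulr0 addr0.
by case: ifP => iB; rewrite ?mevalXU ?meval0 mulr0 ?mulr1 ?mulr0 add0r.
Qed.

End IndicatorLineIdeal.

Lemma disjointI (T : finType) (A B : {pred T}) :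
  (forall x, x \in A -> x \in B -> False) -> [disjoint A & B].
Proof.
move=> H; rewrite disjoint_subset; apply/subsetP => x xA.
by rewrite inE; apply/negP => xB; exact: H x xA xB.
Qed.

Lemma set2C (T : finType) (a b : T) : [set a; b] = [set b; a].
Proof. by apply/setP => x; rewrite !inE orbC. Qed.

Lemma disjoint_nonempty_neq (T : finType) (A B : {set T}) :
  A != set0 -> B != set0 -> [disjoint A & B] -> [&& A != B, A != A :|: B & B != A :|: B].
Proof.
move=> /set0Pn [a aA] /set0Pn [b bB] d.
apply/and3P; split; apply/negP => /eqP /setP.
- by move/(_ a); rewrite aA (disjointFr d aA).
- by move/(_ b); rewrite inE bB orbT (disjointFl d bB).
- by move/(_ a); rewrite inE aA (disjointFr d aA).
Qed.

Section GraphCurveLines.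
Variables (V : finType) (adj : rel V).
Hypotheses (adj_sym : ssrbool.symmetric adj) (adj_irr : irreflexive adj)
  (deg_le3 : forall v, (deg adj v <= 3)%N) (deg3_far : deg3_far_apart adj)
  (no_triangle : triangle_free adj).

Definition nbrs v : seq V := enum [set u | adj v u].
Lemma mem_nbrs v u : (u \in nbrs v) = adj v u.
Proof. by rewrite mem_enum inE. Qed.
Lemma size_nbrs v : size (nbrs v) = deg adj v.
Proof. by rewrite /deg cardE. Qed.

Definition nbr_pos v u := index u (nbrs v).

Lemma nbr_pos_lt v u : adj v u -> nbr_pos v u < deg adj v.
Proof. by rewrite /nbr_pos -size_nbrs index_mem mem_nbrs. Qed.

Lemma nbr_pos_inj v u w : adj v u -> adj v w -> nbr_pos v u = nbr_pos v w -> u = w.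
Proof.
move=> hu hw E.
have e1 : nth u (nbrs v) (nbr_pos v u) = u by apply: nth_index; rewrite mem_nbrs.
have e2 : nth u (nbrs v) (nbr_pos v w) = w by apply: nth_index; rewrite mem_nbrs.
by rewrite -e1 -e2 E.
Qed.

Lemma nbr_pos2_deg3 v u : adj v u -> nbr_pos v u = 2 -> deg adj v = 3.
Proof. by move=> h E; have := nbr_pos_lt h; have := deg_le3 v; rewrite E; lia. Qed.

Lemma deg3_nadj v u : deg adj v = 3 -> deg adj u = 3 -> ~~ adj v u.
Proof.
move=> dv du; case: (eqVneq v u) => [->|vu]; first by rewrite adj_irr.
by case: (deg3_far vu dv du).
Qed.

Lemma deg3_no_common_nbr x y v :
  x != y -> deg adj x = 3 -> deg adj y = 3 -> adj x v -> adj v y -> False.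
Proof. by move=> xy dx dy h1 h2; case: (deg3_far xy dx dy) => _ /(_ v); rewrite h1 h2. Qed.

Lemma nbr_pos_deg3_lt2 v u : adj v u -> deg adj v = 3 -> nbr_pos u v < 2.
Proof.
move=> h dv; have h' : adj u v by rewrite adj_sym.
have := nbr_pos_lt h'; have := deg_le3 u.
have : deg adj u != 3 by apply/eqP => du; move: (deg3_nadj dv du); rewrite h.
lia.
Qed.

(* A slot [(v, b)] stands for the neighbour of [v] at position [b] of [nbrs v]; a third
   neighbour, at position 2, exists only if [v] has degree 3. *)
Definition paired (s t : V * bool) : bool :=
  [&& adj s.1 t.1, nbr_pos s.1 t.1 == s.2 & nbr_pos t.1 s.1 == t.2].

Definition absorbs (s : V * bool) (u : V) : bool :=
  [&& adj s.1 u, nbr_pos s.1 u == s.2 & nbr_pos u s.1 == 2].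
Definition absorbed (s : V * bool) : bool := [exists u, absorbs s u].

Lemma paired_sym s t : paired s t = paired t s.
Proof. by rewrite /paired adj_sym; case: (adj _ _) => //=; rewrite andbC. Qed.

Lemma paired_uniq s t t' : paired s t -> paired s t' -> t = t'.
Proof.
case: t t' => [t b] [t' b'] /and3P [h1 /eqP e1 /eqP e2] /and3P [h1' /eqP e1' /eqP e2'] /=.
have tt : t = t' by apply: (nbr_pos_inj h1 h1'); rewrite e1 e1'.
subst t'; have : nat_of_bool b = nat_of_bool b' by rewrite -e2 -e2'.
move=> E; clear -E; by case: b b' E => [] [].
Qed.

Lemma absorbs_uniq s u u' : absorbs s u -> absorbs s u' -> u = u'.
Proof.
case/and3P => h /eqP e _ /and3P [h' /eqP e' _].
by apply: (nbr_pos_inj h h'); rewrite e e'.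
Qed.

Lemma absorbs_deg3 s u : absorbs s u -> deg adj u = 3.
Proof. by case/and3P => h _ /eqP e; apply: (nbr_pos2_deg3 _ e); rewrite adj_sym. Qed.

Lemma paired_nabsorbed s t : paired s t -> ~~ absorbed s.
Proof.
move=> p; apply/existsP => -[u ab]; move: p ab.
case/and3P => h /eqP e1 /eqP e2 /and3P [h' /eqP e1' /eqP e2'].
have tu : t.1 = u by apply: (nbr_pos_inj h h'); rewrite e1 e1'.
by move: e2; rewrite tu e2'; case: (t.2).
Qed.

Lemma deg3_nabsorbed x b : deg adj x = 3 -> ~~ absorbed (x, b).
Proof.
move=> dx; apply/existsP => -[u ab]; have du := absorbs_deg3 ab.
by case/and3P: ab => /= h _ _; move: (deg3_nadj dx du); rewrite h.
Qed.

Local Notation rk := (@enum_rank (V * bool)%type).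

Definition slot_key (s : V * bool) : 'I_#|{: V * bool}| :=
  if [pick t | paired s t] is Some t then (if (rk t < rk s)%N then rk t else rk s) else rk s.

Lemma slot_key_spec s : exists x, slot_key s = rk x /\ (x = s \/ paired s x).
Proof.
rewrite /slot_key; case: pickP => [t pt|_]; last by exists s; split => //; left.
by case: ifP => _; [exists t; split => //; right | exists s; split => //; left].
Qed.

Lemma slot_key_eq s t : slot_key s = slot_key t <-> s = t \/ paired s t.
Proof.
split.
  have [x [-> hx]] := slot_key_spec s; have [y [-> hy]] := slot_key_spec t.
  move/enum_rank_inj => xy; rewrite -xy in hy.
  case: hx hy => [-> [->|p]|p [<-|p']]; [by left|by right; rewrite paired_sym|by right|].
  by left; apply: (@paired_uniq x); rewrite paired_sym.
case=> [->//|p].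
rewrite /slot_key; case: pickP => [t' pt'|/(_ t)]; last by rewrite p.
case: pickP => [s' ps'|/(_ s)]; last by rewrite paired_sym p.
have <- := paired_uniq p pt'; rewrite paired_sym in p; have <- := paired_uniq p ps'.
case: (ltngtP (rk t) (rk s)) => h.
- by [].
- by [].
- by apply: val_inj; rewrite /= h.
Qed.

Lemma slot_key_paired s t : paired s t -> slot_key s = (if (rk t < rk s)%N then rk t else rk s).
Proof.
move=> p; rewrite /slot_key; case: pickP => [t' pt'|/(_ t)]; last by rewrite p.
by rewrite (paired_uniq pt' p).
Qed.

Lemma paired_irr s : ~~ paired s s.
Proof. by rewrite /paired adj_irr. Qed.

(* Coordinates are indexed by the keys of the non-absorbed slots. Every edge accounts for a
   distinct key of [spent_keys] (an absorbed slot, or the larger rank of a pair), and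
   [spent_keys] is disjoint from [coord_keys]; this gives [card_coord_keys]. *)
Definition coord_keys := [set slot_key s | s in [pred s | ~~ absorbed s]].
Definition spent_keys :=
  [set rk s | s in [pred s | absorbed s || [exists t, paired s t && (rk t < rk s)%N]]].

Lemma disjoint_coord_spent_keys : [disjoint coord_keys & spent_keys].
Proof.
apply: disjointI => i /imsetP [s ns ->] /imsetP [s0 h0 e].
have [x [kx hx]] := slot_key_spec s; rewrite kx in e; have xs0 := enum_rank_inj e.
subst s0; move: h0; rewrite inE => /orP [ax|/existsP [t /andP [pt lt]]].
  case: hx => [xs|p]; first by move: ns; rewrite inE -xs ax.
  by rewrite paired_sym in p; move: ax; rewrite (negbTE (paired_nabsorbed p)).
case: hx => [xs|p].
  subst x; move: kx; rewrite (slot_key_paired pt) lt => /enum_rank_inj ts.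
  by move: pt; rewrite ts (negbTE (paired_irr s)).
rewrite paired_sym in p; have ts := paired_uniq pt p; subst t.
have psx : paired s x by rewrite paired_sym.
move: kx; rewrite (slot_key_paired psx).
case: ifP => h; first by move: h lt; lia.
move/enum_rank_inj => sx; subst x; by move: lt; rewrite ltnn.
Qed.

Lemma nat_of_bool_eqn1 i : (i < 2)%N -> nat_of_bool (i == 1%N) = i.
Proof. by case: i => [|[|]]. Qed.

Definition key_edge (i : 'I_#|{: V * bool}|) : {set V} :=
  let s := enum_val i in [set s.1; nth s.1 (nbrs s.1) s.2].

Lemma key_edgeE (a c : V) (b : bool) :
  adj a c -> nbr_pos a c = b -> key_edge (rk (a, b)) = [set a; c].
Proof.
move=> h e; rewrite /key_edge enum_rankK /= -e /nbr_pos nth_index //.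
by rewrite mem_nbrs.
Qed.

Lemma card_edges_le_spent : (#|edges adj| <= #|spent_keys|)%N.
Proof.
apply: leq_trans (leq_imset_card key_edge _); apply: subset_leq_card.
apply/subsetP => e; rewrite inE => /existsP [u /existsP [v /andP [huv /eqP ->]]].
have hvu : adj v u by rewrite adj_sym.
have lu := nbr_pos_lt huv; have lv := nbr_pos_lt hvu; have du := deg_le3 u; have dv := deg_le3 v.
case: (eqVneq (nbr_pos u v) 2) => [e2|n2].
  have l2 := nbr_pos_deg3_lt2 huv (nbr_pos2_deg3 huv e2).
  apply/imsetP; exists (rk (v, nbr_pos v u == 1%N)).
    apply/imset_f; rewrite inE; apply/orP; left; apply/existsP; exists u.
    by rewrite /absorbs /= hvu nat_of_bool_eqn1 // eqxx e2 /=.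
  by rewrite (key_edgeE hvu) ?nat_of_bool_eqn1 // set2C.
case: (eqVneq (nbr_pos v u) 2) => [e2|n2'].
  have l2 := nbr_pos_deg3_lt2 hvu (nbr_pos2_deg3 hvu e2).
  apply/imsetP; exists (rk (u, nbr_pos u v == 1%N)).
    apply/imset_f; rewrite inE; apply/orP; left; apply/existsP; exists v.
    by rewrite /absorbs /= huv nat_of_bool_eqn1 // eqxx e2 /=.
  by rewrite (key_edgeE huv) ?nat_of_bool_eqn1.
have l1 : (nbr_pos u v < 2)%N by move: lu n2; lia.
have l2 : (nbr_pos v u < 2)%N by move: lv n2'; lia.
set s := (u, nbr_pos u v == 1%N); set t := (v, nbr_pos v u == 1%N).
have pst : paired s t by rewrite /paired /= huv !nat_of_bool_eqn1 // !eqxx.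
have st : s != t by apply: contraTneq huv => [[->]]; rewrite adj_irr.
case: (ltngtP (rk t) (rk s)) => h.
- apply/imsetP; exists (rk s).
    apply/imset_f; rewrite inE; apply/orP; right; apply/existsP; exists t; by rewrite pst h.
  by rewrite (key_edgeE huv) ?nat_of_bool_eqn1.
- apply/imsetP; exists (rk t).
    apply/imset_f; rewrite inE; apply/orP; right; apply/existsP; exists s.
    by rewrite paired_sym pst h.
  by rewrite (key_edgeE hvu) ?nat_of_bool_eqn1 // set2C.
- by move: st; rewrite (enum_rank_inj (val_inj h)) eqxx.
Qed.

Lemma card_coord_keys : (#|coord_keys| + #|edges adj| <= 2 * #|V|)%N.
Proof.
apply: (@leq_trans (#|coord_keys| + #|spent_keys|)); first by rewrite leq_add2l card_edges_le_spent.
have := cardsU coord_keys spent_keys.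
rewrite disjoint_setI0 ?disjoint_coord_spent_keys // cards0 subn0 => <-.
apply: leq_trans (max_card _) _; rewrite card_ord card_prod card_bool; lia.
Qed.

Variable n : nat.
Hypothesis card_keys_le : (#|coord_keys| <= n.+1)%N.

(* Meaningful only for non-absorbed [s], whose key lies in [coord_keys]. *)
Definition coord (s : V * bool) : 'I_n.+1 := inord (index (slot_key s) (enum (coord_keys))).

Lemma coord_val s : ~~ absorbed s -> nat_of_ord (coord s) = index (slot_key s) (enum (coord_keys)).
Proof.
move=> ns; rewrite /coord inordK //; apply: leq_trans card_keys_le.
by rewrite cardE index_mem mem_enum; apply: imset_f; rewrite inE.
Qed.

Lemma coord_eq s t : ~~ absorbed s -> ~~ absorbed t -> coord s = coord t -> s = t \/ paired s t.
Proof.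
move=> ns nt e; apply: (proj1 (slot_key_eq s t)).
have := congr1 (@nat_of_ord _) e; rewrite !coord_val // => ei.
have ks : slot_key s \in enum (coord_keys) by rewrite mem_enum; apply: imset_f; rewrite inE.
have kt : slot_key t \in enum (coord_keys) by rewrite mem_enum; apply: imset_f; rewrite inE.
by rewrite -(nth_index (slot_key s) ks) ei nth_index.
Qed.

Lemma coord_paired s t : paired s t -> coord s = coord t.
Proof. by move=> p; rewrite /coord (proj2 (slot_key_eq s t)) //; right. Qed.

Definition block (s : V * bool) : {set 'I_n.+1} :=
  if [pick u | absorbs s u] is Some u then [set coord (u, false); coord (u, true)]
  else [set coord s].

Definition block_source (s s' : V * bool) : Prop :=
  (~~ absorbed s /\ s' = s) \/ (exists u, absorbs s u /\ s'.1 = u).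

Lemma mem_block_source s j : j \in block s -> exists s', block_source s s' /\ j = coord s'.
Proof.
rewrite /block; case: pickP => [u au|nu].
  rewrite !inE => /orP [] /eqP ->; [exists (u, false)|exists (u, true)].
    by split => //; right; exists u.
  by split => //; right; exists u.
rewrite inE => /eqP ->; exists s; split => //; left; split => //.
by apply/existsP => -[u]; rewrite nu.
Qed.

Lemma block_source_nabsorbed s s' : block_source s s' -> ~~ absorbed s'.
Proof.
case=> [[ns ->]//|[u [au su]]].
case: s' su => x b /= ->; apply: (deg3_nabsorbed); exact: (absorbs_deg3 au).
Qed.

Lemma block_neq0 s : block s != set0.
Proof.
rewrite /block; case: pickP => [u _|_]; apply/set0Pn.
  by exists (coord (u, false)); rewrite !inE eqxx.
by exists (coord s); rewrite !inE eqxx.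
Qed.

Lemma disjoint_blocks s t :
  (forall s' t', block_source s s' -> block_source t t' -> s' = t' \/ paired s' t' -> False) ->
  [disjoint block s & block t].
Proof.
move=> H; apply: disjointI => j /mem_block_source [s' [hs ->]] /mem_block_source [t' [ht e]].
apply: (H s' t' hs ht); apply: coord_eq => //.
  exact: block_source_nabsorbed hs.
exact: block_source_nabsorbed ht.
Qed.

Lemma block_nabsorbed s : ~~ absorbed s -> block s = [set coord s].
Proof. by move=> ns; rewrite /block; case: pickP => // u au; move: ns => /existsP []; exists u. Qed.

Lemma block_absorbed s u : absorbs s u -> block s = [set coord (u, false); coord (u, true)].
Proof.
move=> au; rewrite /block; case: pickP => [u' au'|/(_ u)]; last by rewrite au.
by rewrite (absorbs_uniq au' au).
Qed.

Lemma absorbsE v b u : absorbs (v, b) u = [&& adj v u, nbr_pos v u == b & nbr_pos u v == 2].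
Proof. by []. Qed.

Lemma pairedE v b u c : paired (v, b) (u, c) = [&& adj v u, nbr_pos v u == b & nbr_pos u v == c].
Proof. by []. Qed.

Lemma nat_of_boolN_eqF (b : bool) : (nat_of_bool b == nat_of_bool (~~ b)) = false.
Proof. by case: b. Qed.

Lemma disjoint_vertex_blocks v : [disjoint block (v, false) & block (v, true)].
Proof.
apply: disjoint_blocks => s' t' [[_ ->]|[x [ax sx]]] [[_ ->]|[y [ay ty]]].
- by case=> [[]|]; rewrite ?pairedE ?adj_irr.
- move: ay; rewrite absorbsE => /and3P [hy /eqP iy _].
  case: t' ty => y' c /= -> [[e _]|]; first by move: hy; rewrite -e adj_irr.
  by rewrite pairedE iy => /and3P [].
- move: ax; rewrite absorbsE => /and3P [hx /eqP ix _].
  case: s' sx => x' c /= -> [[e _]|]; first by move: hx; rewrite e adj_irr.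
  by rewrite pairedE ix => /and3P [].
- move=> _; have dx := absorbs_deg3 ax; have dy := absorbs_deg3 ay.
  move: ax ay; rewrite !absorbsE => /and3P [hx /eqP ix _] /and3P [hy /eqP iy _].
  have xy : x != y by apply: contraTneq isT => exy; move: ix; rewrite exy iy.
  by apply: (deg3_no_common_nbr xy dx dy (v := v)); rewrite // adj_sym.
Qed.

Lemma disjoint_paired_blocks v u bv bu : paired (v, bv) (u, bu) ->
  [disjoint block (v, ~~ bv) & block (u, ~~ bu)].
Proof.
rewrite pairedE => /and3P [hvu /eqP ivu /eqP iuv].
have huv : adj u v by rewrite adj_sym.
apply: disjoint_blocks => s' t' [[_ ->]|[x [ax sx]]] [[_ ->]|[y [ay ty]]].
- case=> [[e _]|]; first by move: hvu; rewrite e adj_irr.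
  by rewrite pairedE ivu nat_of_boolN_eqF andbF.
- move: ay; rewrite absorbsE => /and3P [hy /eqP iy _].
  case: t' ty => y' c /= -> [[e _]|].
    by move: iy; rewrite -e iuv => /eqP; rewrite nat_of_boolN_eqF.
  rewrite pairedE => /and3P [hvy _ _].
  by move: (no_triangle v u y); rewrite hvu hy adj_sym hvy.
- move: ax; rewrite absorbsE => /and3P [hx /eqP ix _].
  case: s' sx => x' c /= -> [[e _]|].
    by move: ix; rewrite e ivu => /eqP; rewrite nat_of_boolN_eqF.
  rewrite pairedE => /and3P [hxu _ _].
  by move: (no_triangle u v x); rewrite huv hx hxu.
- have dx := absorbs_deg3 ax; have dy := absorbs_deg3 ay.
  move: ax ay; rewrite !absorbsE => /and3P [hx _ _] /and3P [hy _ _].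
  case: s' sx t' ty => x' c /= -> [y' d] /= -> [[e _]|].
    by subst y; move: (no_triangle v u x); rewrite hvu hy adj_sym hx.
  rewrite pairedE => /and3P [hxy _ _].
  by move: (deg3_nadj dx dy); rewrite hxy.
Qed.

Lemma coord_neq s t :
  ~~ absorbed s -> ~~ absorbed t -> s != t -> ~~ paired s t -> coord s != coord t.
Proof.
move=> ns nt st pst; apply/negP => /eqP /(coord_eq ns nt) [e|p]; first by move: st; rewrite e eqxx.
by move: pst; rewrite p.
Qed.

Lemma disjoint_far_blocks u w b c : u != w -> ~~ adj u w ->
  (forall x, adj x u -> adj x w -> (nbr_pos x w != 2) && (nbr_pos x u != 2)) ->
  [disjoint block (u, b) & block (w, c)].
Proof.
move=> uw nuw H.
apply: disjoint_blocks => s' t' [[_ ->]|[x [ax sx]]] [[_ ->]|[y [ay ty]]].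
- case=> [[e _]|]; first by move: uw; rewrite e eqxx.
  by rewrite pairedE (negbTE nuw).
- move: ay; rewrite absorbsE => /and3P [hy _ /eqP iy].
  case: t' ty => y' d /= -> [[e _]|].
    by move: nuw; rewrite e adj_sym hy.
  rewrite pairedE => /and3P [huy _ _].
  by move: (H y); rewrite adj_sym huy adj_sym hy iy eqxx => /(_ isT isT).
- move: ax; rewrite absorbsE => /and3P [hx _ /eqP ix].
  case: s' sx => x' d /= -> [[e _]|].
    by move: nuw; rewrite -e hx.
  rewrite pairedE => /and3P [hxw _ _].
  by move: (H x); rewrite adj_sym hx hxw ix eqxx andbF => /(_ isT isT).
- have dx := absorbs_deg3 ax; have dy := absorbs_deg3 ay.
  move: ax ay; rewrite !absorbsE => /and3P [hx _ /eqP ix] /and3P [hy _ /eqP iy].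
  case: s' sx t' ty => x' d /= -> [y' e] /= -> [[exy _]|].
    subst y; move: uw; rewrite (@nbr_pos_inj x u w) ?eqxx // ?ix ?iy // adj_sym //.
  rewrite pairedE => /and3P [hxy _ _].
  by move: (deg3_nadj dx dy); rewrite hxy.
Qed.

Lemma other_slot_nabsorbed v x (b : bool) : deg adj x = 3 -> adj v x -> nbr_pos v x = b ->
  ~~ absorbed (v, ~~ b).
Proof.
move=> dx hvx ivx; apply/existsP => -[y]; rewrite absorbsE => /and3P [hvy /eqP ivy /eqP iyv].
have dy : deg adj y = 3 by apply: (nbr_pos2_deg3 _ iyv); rewrite adj_sym.
have xy : x != y.
  apply: contraTneq isT => exy; move: ivx; rewrite exy ivy => /eqP.
  by rewrite eq_sym nat_of_boolN_eqF.
by apply: (deg3_no_common_nbr xy dx dy (v := v)); rewrite // adj_sym.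
Qed.

Lemma common_nbr_blocks u w x : u != w -> ~~ adj u w -> adj x u -> adj x w -> nbr_pos x w = 2 ->
  exists bu bw (p q s r : 'I_n.+1),
  [/\ block (u, bu) = [set p], block (u, ~~ bu) = [set q], block (w, bw) = [set p; s],
      block (w, ~~ bw) = [set r] &
      [&& s != p, s != q, s != r, r != p & r != q]].
Proof.
move=> uw nuw hxu hxw ixw.
have dx := nbr_pos2_deg3 hxw ixw.
have hux : adj u x by rewrite adj_sym.
have hwx : adj w x by rewrite adj_sym.
have ixu : (nbr_pos x u < 2)%N.
  have := nbr_pos_lt hxu; rewrite dx => l.
  have : nbr_pos x u != 2.
    by apply: contraNneq uw => e; apply/eqP/(nbr_pos_inj hxu hxw); rewrite e ixw.
  by move: l; lia.
have iux := nbr_pos_deg3_lt2 hxu dx.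
have iwx := nbr_pos_deg3_lt2 hxw dx.
set cu := (nbr_pos x u == 1%N); set bu := (nbr_pos u x == 1%N); set bw := (nbr_pos w x == 1%N).
have ecu : nat_of_bool cu = nbr_pos x u by rewrite nat_of_bool_eqn1.
have ebu : nat_of_bool bu = nbr_pos u x by rewrite nat_of_bool_eqn1.
have ebw : nat_of_bool bw = nbr_pos w x by rewrite nat_of_bool_eqn1.
have nx b : ~~ absorbed (x, b) by apply: deg3_nabsorbed.
have p1 : paired (u, bu) (x, cu) by rewrite pairedE hux ebu ecu !eqxx.
have nu' := other_slot_nabsorbed dx hux (esym ebu).
have nw' := other_slot_nabsorbed dx hwx (esym ebw).
have aw : absorbs (w, bw) x by rewrite absorbsE hwx ebw ixw !eqxx.
exists bu, bw, (coord (x, cu)), (coord (u, ~~ bu)), (coord (x, ~~ cu)), (coord (w, ~~ bw)); split.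
- by rewrite block_nabsorbed ?(paired_nabsorbed p1) // (coord_paired p1).
- by rewrite block_nabsorbed.
- rewrite (block_absorbed aw); by case: (cu); rewrite // set2C.
- by rewrite block_nabsorbed.
have neq := coord_neq.
apply/and5P; split.
- rewrite eq_sym; apply: neq => //; first by apply/negP => /eqP []; case: (cu).
  by rewrite pairedE adj_irr.
- apply: neq => //; first by apply: contraTneq hxu => -[<-]; rewrite adj_irr.
  by rewrite pairedE -ecu nat_of_boolN_eqF /= andbF.
- apply: neq => //; first by apply: contraTneq hxw => -[<-]; rewrite adj_irr.
  by rewrite pairedE hxw ixw; case: (cu).
- rewrite eq_sym; apply: neq => //; first by apply: contraTneq hxw => -[<-]; rewrite adj_irr.
  by rewrite pairedE hxw ixw; case: (cu).
- apply: neq => //; first by apply: contra_neq uw => -[->].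
  by rewrite pairedE adj_sym (negbTE nuw).
Qed.

Variable k : fieldType.

Definition vertex_line v : 'M[k]_n.+1 := ind_line k (block (v, false)) (block (v, true)).

Lemma disjoint_vertex_blocksN v b : [disjoint block (v, b) & block (v, ~~ b)].
Proof. by case: b; [rewrite disjoint_sym|]; apply: disjoint_vertex_blocks. Qed.

Lemma vertex_lineE v b : vertex_line v = ind_line k (block (v, b)) (block (v, ~~ b)).
Proof. by case: b; rewrite // ind_lineC. Qed.

Lemma block_sub_vertex_line v b : (ind_row k (block (v, b)) <= vertex_line v)%MS.
Proof.
rewrite (vertex_lineE v b); apply/sub_ind_lineP.
by exists 1%R, 0%R; rewrite scale1r scale0r addr0.
Qed.

Lemma mxrank_vertex_line v : \rank (vertex_line v) = 2%N.
Proof. by apply: mxrank_ind_line; rewrite ?block_neq0 ?disjoint_vertex_blocks. Qed.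

Definition node_block v u :=
  if nbr_pos v u == 2 then block (v, false) :|: block (v, true) else block (v, nbr_pos v u == 1%N).

Lemma node_block_neq0 v u : node_block v u != set0.
Proof.
by rewrite /node_block; case: ifP => _; rewrite ?setU_eq0 ?negb_and ?block_neq0.
Qed.

Lemma vertex_line_cap_absorbed v u : adj v u -> nbr_pos v u = 2 ->
  (vertex_line v :&: vertex_line u == ind_row k (node_block v u))%MS /\
  node_block v u = node_block u v.
Proof.
move=> hvu ivu; have huv : adj u v by rewrite adj_sym.
have dv := nbr_pos2_deg3 hvu ivu; have iuv := nbr_pos_deg3_lt2 hvu dv.
set bu := (nbr_pos u v == 1%N).
have au : absorbs (u, bu) v by rewrite absorbsE huv nat_of_bool_eqn1 // ivu !eqxx.
have Bv b : block (v, b) = [set coord (v, b)] by rewrite block_nabsorbed // deg3_nabsorbed.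
have Bu : block (u, bu) = [set coord (v, false); coord (v, true)] by apply: block_absorbed.
have ndv : node_block v u = block (u, bu) by rewrite /node_block ivu eqxx !Bv Bu.
have ndu : node_block u v = block (u, bu) by rewrite /node_block ltn_eqF.
split; last by rewrite ndv ndu.
rewrite ndv; apply: capmx_eq_row; rewrite ?block_sub_vertex_line //.
  rewrite Bu -!Bv ind_rowU ?disjoint_vertex_blocks //; apply/sub_ind_lineP.
  by exists 1%R, 1%R; rewrite !scale1r.
move=> x; rewrite (vertex_lineE u bu) Bu -!Bv => hx hy.
apply: ind_line_cap_sub (block_neq0 _) _ hx hy.
by rewrite setUid !Bv -Bu disjoint_vertex_blocksN.
Qed.

Lemma vertex_line_cap v u : adj v u ->
  (vertex_line v :&: vertex_line u == ind_row k (node_block v u))%MS /\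
  node_block v u = node_block u v.
Proof.
move=> hvu; have huv : adj u v by rewrite adj_sym.
have [ivu|n1] := eqVneq (nbr_pos v u) 2; first exact: vertex_line_cap_absorbed.
have [iuv|n2] := eqVneq (nbr_pos u v) 2.
  by have [h1 h2] := vertex_line_cap_absorbed huv iuv; rewrite capmxC -h2.
have l1 : (nbr_pos v u < 2)%N by have := nbr_pos_lt hvu; have := deg_le3 v; move: n1; lia.
have l2 : (nbr_pos u v < 2)%N by have := nbr_pos_lt huv; have := deg_le3 u; move: n2; lia.
set bv := (nbr_pos v u == 1%N); set bu := (nbr_pos u v == 1%N).
have p : paired (v, bv) (u, bu) by rewrite pairedE hvu !nat_of_bool_eqn1 // !eqxx.
have Bu : block (u, bu) = block (v, bv).
  rewrite !block_nabsorbed ?(coord_paired p) ?(paired_nabsorbed p) //.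
  by apply: (paired_nabsorbed (t := (v, bv))); rewrite paired_sym.
have ndv : node_block v u = block (v, bv) by rewrite /node_block (negbTE n1).
have ndu : node_block u v = block (u, bu) by rewrite /node_block (negbTE n2).
split; last by rewrite ndv ndu Bu.
rewrite ndv -Bu; apply: capmx_eq_row; rewrite ?block_sub_vertex_line //.
  by rewrite Bu block_sub_vertex_line.
move=> x; rewrite (vertex_lineE v bv) (vertex_lineE u bu) => hx hy.
apply: ind_line_cap_sub (block_neq0 _) _ hx hy.
rewrite -setI_eq0 !setIUl !setU_eq0 !setI_eq0 -Bu.
by rewrite disjoint_vertex_blocksN (disjoint_paired_blocks p).
Qed.

Lemma vertex_line_cap_common_nbr u w x (y : 'rV[k]_n.+1) :
  u != w -> ~~ adj u w -> adj x u -> adj x w ->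
  nbr_pos x w = 2 -> (y <= vertex_line u)%MS -> (y <= vertex_line w)%MS -> y = 0%R.
Proof.
move=> uw nuw hxu hxw ixw.
have [bu [bw [p [q [s [r [Bu Bu' Bw Bw' /and5P [sp sq sr rp rq]]]]]]]] :=
  common_nbr_blocks uw nuw hxu hxw ixw.
rewrite (vertex_lineE u bu) (vertex_lineE w bw) Bu Bu' Bw Bw'.
apply: (ind_line_cap_eq0 (i := s) (j := r)); rewrite !inE ?eqxx ?orbT //.
  by rewrite (negbTE sp) (negbTE sq) (negbTE sr).
by rewrite (negbTE rp) (negbTE rq) (eq_sym r) (negbTE sr).
Qed.

Lemma vertex_line_cap_nadj v u : v != u -> ~~ adj v u ->
  \rank (vertex_line v :&: vertex_line u)%MS = 0%N.
Proof.
move=> vu nvu; apply: mxrank_cap0 => y hv hu.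
case: (pickP [pred x | [&& adj x v, adj x u & nbr_pos x u == 2]]) => [x|nc1].
  by case/and3P => hxv hxu /eqP ixu; apply: vertex_line_cap_common_nbr hxv hxu ixu hv hu.
case: (pickP [pred x | [&& adj x u, adj x v & nbr_pos x v == 2]]) => [x|nc2].
  case/and3P => hxu hxv /eqP ixv.
  by apply: vertex_line_cap_common_nbr hxu hxv ixv hu hv; rewrite 1?eq_sym 1?adj_sym.
have far x : adj x v -> adj x u -> (nbr_pos x u != 2) && (nbr_pos x v != 2).
  by move=> hxv hxu; move: (nc1 x) (nc2 x) => /=; rewrite hxv hxu /= => -> ->.
have d b c := disjoint_far_blocks b c vu nvu far.
case/set0Pn: (block_neq0 (u, false)) => i iu; case/set0Pn: (block_neq0 (u, true)) => j ju.
apply: (ind_line_cap_eq0 (i := i) (j := j)) hv hu; rewrite // !inE.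
  rewrite (disjointFl (d _ _) iu) (disjointFl (d _ _) iu).
  by rewrite (disjointFr (disjoint_vertex_blocks u) iu).
rewrite (disjointFl (d _ _) ju) (disjointFl (d _ _) ju).
by rewrite (disjointFl (disjoint_vertex_blocks u) ju).
Qed.

Lemma node_block_neq v u w : adj v u -> adj v w -> u != w -> node_block v u != node_block v w.
Proof.
move=> hu hw uw.
have iuw : nbr_pos v u != nbr_pos v w by apply: contra_neq uw; apply: nbr_pos_inj.
have lu := nbr_pos_lt hu; have lw := nbr_pos_lt hw; have dv := deg_le3 v.
have /and3P [n01 n0U n1U] := disjoint_nonempty_neq (block_neq0 (v, false))
  (block_neq0 (v, true)) (disjoint_vertex_blocks v).
rewrite /node_block; move: iuw lu lw.
case: (nbr_pos v u) => [|[|[|i]]]; case: (nbr_pos v w) => [|[|[|j]]] //= _.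
all: try (move=> h1 h2; lia).
all: move=> _ _; try by rewrite ?n01 ?n0U ?n1U.
all: by rewrite eq_sym ?n01 ?n0U ?n1U.
Qed.

Lemma vertex_line_embedding : graph_curve_embedding adj vertex_line.
Proof.
split.
- exact: mxrank_vertex_line.
- move=> u v _ huv; have [/eqmx_rank -> _] := vertex_line_cap huv.
  by rewrite rank_rV ind_row_neq0 ?node_block_neq0.
- exact: vertex_line_cap_nadj.
- move=> v u w hvu hvw uw.
  have huv : adj u v by rewrite adj_sym.
  have hwv : adj w v by rewrite adj_sym.
  have [+ e1] := vertex_line_cap huv; have [+ e2] := vertex_line_cap hwv.
  rewrite e1 e2 => h2 h1; apply: capmx_ind_row_neq h1 h2; first exact: node_block_neq0.
  exact: node_block_neq.
Qed.

Hypothesis k_char0 : ([pchar k] =i pred0)%R.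

Lemma vertex_line_ideal v : exists S : seq {mpoly k[n.+1]},
  (forall f, f \in S -> var_or_binomial f) /\
  (forall p, vanishing_ideal (vertex_line v) p <-> ideal_gen S p).
Proof.
case/set0Pn: (block_neq0 (v, false)) => r0 r0A; case/set0Pn: (block_neq0 (v, true)) => r1 r1B.
exists (ind_line_gens k (block (v, false)) (block (v, true)) r0 r1); split.
  exact: ind_line_gens_var_or_binomial.
by move=> p; exact (vanishing_ideal_ind_line k_char0 r0A r1B (disjoint_vertex_blocks v) p).
Qed.

End GraphCurveLines.

Local Open Scope ring_scope.

Theorem theorem1p3 (k : closedFieldType) (hchar : [pchar k] =i pred0)
    (V : finType) (adj : rel V)
    (Hsimple : simple_graph adj)
    (Hconn : connected_graph adj)
    (Hsub : strictly_subtrivalent adj)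
    (Hfar : deg3_far_apart adj)
    (Htri : triangle_free adj) :
  exists L : V -> 'M[k]_((target_dim adj).+1),
    graph_curve_embedding adj L /\
    forall v : V, exists S : seq {mpoly k[(target_dim adj).+1]},
      (forall f, f \in S -> var_or_binomial f) /\
      (forall p, vanishing_ideal (L v) p <-> ideal_gen S p).
Proof.
case: Hsimple => adj_sym adj_irr; case: Hsub => deg_le3 _.
have card_keys : (#|coord_keys adj| <= (target_dim adj).+1)%N.
  by have := card_coord_keys adj_sym adj_irr deg_le3 Hfar; rewrite /target_dim; lia.
exists (@vertex_line V adj (target_dim adj) k); split.
  exact: vertex_line_embedding.
exact: vertex_line_ideal.
Qed.
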